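(* In the sleeping multi-armed bandit setting, let $(\ell_t)_{t=1}^T$ be an arbitrary deterministic sequence of loss vectors in $[0,1]^K$ fixed in advance (oblivious adversary), and let $(S_t)_{t\ge1}$ be i.i.d. random nonempty subsets of $[K]$ (independent of the learner's internal randomness at the same round). Then for any algorithm, $$\max_{\pi}R_T^{\mathrm{policy}}(\pi)=\max_{\sigma}\mathbb E\big[R_T^{\mathrm{ordering}}(\sigma)\big],$$ where $\pi$ ranges over all policies and $\sigma$ over all orderings of $[K]$.
   Context: Sleeping multi-armed bandit setting: $K$ arms $[K]$. At each round $t$ a nonempty availability set $S_t\subseteq[K]$ is revealed, the learner (possibly randomized) selects $k_t\in S_t$ and observes $\ell_t(k_t)$. An ordering is a permutation $\sigma=(\sigma_1,\dots,\sigma_K)$ of $[K]$; for nonempty $S\subseteq[K]$, $\sigma(S)=\sigma_m$ with $m=\min\{i:\sigma_i\in S\}$. Ordering regret: $R_T^{\mathrm{ordering}}(\sigma)=\sum_{t=1}^T\big(\ell_t(k_t)-\ell_t(\sigma(S_t))\big)$. A policy is a map $\pi$ from nonempty subsets of $[K]$ to $[K]$ with $\pi(S)\in S$. Policy regret: $R_T^{\mathrm{policy}}(\pi)=\mathbb E\big[\sum_{t=1}^T\ell_t(k_t)-\sum_{t=1}^T\ell_t(\pi(S_t))\big]$, the expectation being over availabilities and the learner's randomness. *)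

From HB Require Import structures.
From mathcomp Require Import all_boot all_order all_algebra all_fingroup.
From mathcomp Require Import all_classical all_reals all_analysis.
Set Implicit Arguments. Unset Strict Implicit. Unset Printing Implicit Defensive.
Import Order.TTheory GRing.Theory Num.Theory.
Local Open Scope ring_scope.

(* An ordering is a permutation s : {perm 'I_K}, read as the
   sequence (s 0, s 1, ..., s (K-1)). *)
Definition ord_sel (K : nat) (s : {perm 'I_K}) (S : {set 'I_K}) : option 'I_K :=
  if [pick m | s m \in S] is Some m0
  then Some (s [arg min_(m < m0 | s m \in S) (m : nat)])
  else None.

(* A policy: a map from subsets to arms with pi S \in S for every nonempty S
   (its value on the empty set is irrelevant). *)
Definition is_policy (K : nat) (pi : {ffun {set 'I_K} -> 'I_K}) : bool :=
  [forall S : {set 'I_K}, (S != finset.set0) ==> (pi S \in S)].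

Definition ord_loss (R : realType) (T K : nat) (l : 'I_T -> 'I_K -> R)
  (s : {perm 'I_K}) (t : 'I_T) (S : {set 'I_K}) : R :=
  if ord_sel s S is Some k then l t k else 0.

Definition ordering_regret (Omega : Type) (R : realType) (T K : nat)
  (l : 'I_T -> 'I_K -> R) (S : 'I_T -> Omega -> {set 'I_K})
  (k : 'I_T -> Omega -> 'I_K) (s : {perm 'I_K}) : Omega -> R :=
  fun w => \sum_(t < T) (l t (k t w) - ord_loss l s t (S t w)).

Definition policy_regret_rv (Omega : Type) (R : realType) (T K : nat)
  (l : 'I_T -> 'I_K -> R) (S : 'I_T -> Omega -> {set 'I_K})
  (k : 'I_T -> Omega -> 'I_K) (pi : {ffun {set 'I_K} -> 'I_K}) : Omega -> R :=
  fun w => \sum_(t < T) l t (k t w) - \sum_(t < T) l t (pi (S t w)).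

Local Open Scope classical_set_scope.
Definition iid_sets (d : measure_display) (Omega : measurableType d)
  (R : realType) (P : probability Omega R) (T K : nat)
  (S : 'I_T -> Omega -> {set 'I_K}) : Prop :=
  [/\ (forall t (A : {set 'I_K}), measurable [set w | S t w = A]),
      (forall t t' (A : {set 'I_K}),
          P [set w | S t w = A] = P [set w | S t' w = A]) &
      (forall A : 'I_T -> {set {set 'I_K}},
          P (\bigcap_(t in [set: 'I_T]) [set w | S t w \in A t])
          = (\prod_(t < T) P [set w | S t w \in A t])%E)].

From HB Require Import structures.
From mathcomp Require Import all_boot all_order all_algebra all_fingroup.
From mathcomp Require Import all_classical all_reals all_analysis.
Import Order.TTheory GRing.Theory Num.Theory.
Set Implicit Arguments.
Unset Strict Implicit.
Unset Printing Implicit Defensive.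

Local Open Scope ring_scope.

(* Every ordering [s] induces the policy [A |-> s(A)], with the same regret;
   so the maximum over orderings is at most the maximum over policies.
   Conversely, since the sets [S_t] are identically distributed with law [q],
   the expected loss of a policy [pi] is [sum_A q(A) L(pi A)] with [L] the
   cumulative loss of the arms.  Sorting the arms by increasing [L] gives an
   ordering whose induced policy picks an [L]-minimal arm of every [A], hence
   minimises this expected loss and maximises the expected regret. *)

Section OrderingSelection.
Variable K : nat.
Implicit Types (s : {perm 'I_K}) (A : {set 'I_K}).

Lemma ord_sel_in s A i : ord_sel s A = Some i -> i \in A.
Proof. by rewrite /ord_sel; case: pickP => [m0 sel_m0|//] [<-]; case: arg_minnP. Qed.

Lemma ord_sel_nonempty s {A} : A != finset.set0 -> exists i, ord_sel s A = Some i.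
Proof.
case/set0Pn => x xA; rewrite /ord_sel; case: pickP => [m0 _|no_m]; first by eexists.
by move: (no_m (s^-1 x)%g); rewrite permKV xA.
Qed.

Lemma ord_sel_min d (X : porderType d) (L : 'I_K -> X) s :
    (forall m m' : 'I_K, (m <= m')%N -> (L (s m) <= L (s m'))%O) ->
  forall A i j, ord_sel s A = Some i -> j \in A -> (L i <= L j)%O.
Proof.
move=> L_s_mono A i j; rewrite /ord_sel; case: pickP => [m0 sel_m0|//] [<-] jA.
case: arg_minnP => // m _ m_min.
have := m_min (s^-1 j)%g; rewrite permKV => /(_ jA) /L_s_mono.
by rewrite permKV.
Qed.

Lemma sorting_perm d (X : orderType d) (x0 : 'I_K) (L : 'I_K -> X) :
  exists s, forall m m' : 'I_K, (m <= m')%N -> (L (s m) <= L (s m'))%O.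
Proof.
pose r := sort (fun i j => (L i <= L j)%O) (enum 'I_K).
have size_r : size r = K by rewrite size_sort size_enum_ord.
have nth_r_inj : injective (fun m : 'I_K => nth x0 r m).
  move=> m m' /eqP; rewrite nth_uniq ?size_r ?sort_uniq ?enum_uniq //.
  by move/eqP/val_inj.
have r_sorted : sorted (fun i j => (L i <= L j)%O) r.
  by apply: sort_sorted => a b; exact: le_total.
exists (perm nth_r_inj) => m m' le_mm'; rewrite !permE.
have leL_trans : transitive (fun i j => (L i <= L j)%O) by move=> ? ? ?; exact: le_trans.
have := sorted_leq_nth leL_trans (fun i => lexx (L i)) x0 r_sorted.
by apply; rewrite ?inE ?size_r.
Qed.

Definition policy_of_ordering (x0 : 'I_K) s : {ffun {set 'I_K} -> 'I_K} :=
  [ffun A => odflt x0 (ord_sel s A)].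

Lemma policy_of_ordering_is_policy x0 s : is_policy (policy_of_ordering x0 s).
Proof.
apply/forallP => A; apply/implyP => /(ord_sel_nonempty s) [i sel_i].
by rewrite ffunE sel_i; exact: ord_sel_in sel_i.
Qed.

Lemma ordering_regretE (Omega : Type) (R : realType) (T : nat)
    (l : 'I_T -> 'I_K -> R) (S : 'I_T -> Omega -> {set 'I_K})
    (k : 'I_T -> Omega -> 'I_K) x0 s :
    (forall t w, S t w != finset.set0) ->
  ordering_regret l S k s = policy_regret_rv l S k (policy_of_ordering x0 s).
Proof.
move=> S_neq0; apply: funext => w; rewrite /policy_regret_rv -sumrB.
apply: eq_bigr => t _; rewrite /ord_loss ffunE.
by have [i ->] := ord_sel_nonempty s (S_neq0 t w).
Qed.

End OrderingSelection.

Section SimpleFunctions.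
Local Open Scope classical_set_scope.

Lemma sum_mul_indic_level (Omega : Type) (R : realType) (F : finType)
    (c : F -> R) (g : Omega -> F) w :
  \sum_(x : F) c x * \1_[set w | g w = x] w = c (g w).
Proof.
rewrite (bigD1 (g w)) //= big1 ?addr0; first by rewrite indicE mem_set ?mulr1.
by move=> x /eqP gw_neq; rewrite indicE memNset ?mulr0 // => gw_eq; exact: gw_neq.
Qed.

Lemma integral_sum_indic (d : measure_display) (Omega : measurableType d)
    (R : realType) (P : probability Omega R) (I : finType) (c : I -> R)
    (E : I -> set Omega) : (forall i, measurable (E i)) ->
  (\int[P]_w (\sum_(i : I) c i * \1_(E i) w)%:E
   = (\sum_(i : I) c i * fine (P (E i)))%:E)%E.
Proof.
move=> mE; under eq_integral do rewrite -sumEFin.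
rewrite integral_sum //; last first.
  move=> i; under eq_fun do rewrite EFinM.
  by apply: integrableZl => //; exact: integrable_indic.
rewrite -sumEFin; apply: eq_bigr => i _; under eq_integral do rewrite EFinM.
rewrite integralZl //; last exact: integrable_indic.
by rewrite integral_indic // setIT EFinM fineK //; exact: fin_num_measure.
Qed.

End SimpleFunctions.

Section PolicyRegret.
Local Open Scope classical_set_scope.
Variables (d : measure_display) (Omega : measurableType d).
Variables (R : realType) (P : probability Omega R) (T K : nat).
Variables (l : 'I_T -> 'I_K -> R) (S : 'I_T -> Omega -> {set 'I_K}).
Variable k : 'I_T -> Omega -> 'I_K.
Hypothesis mS : forall t A, measurable [set w | S t w = A].
Hypothesis mk : forall t i, measurable [set w | k t w = i].

Let pS t A := fine (P [set w | S t w = A]).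

Lemma expectation_policy_regret pi :
  ('E_P[policy_regret_rv l S k pi]
   = ((\sum_(t < T) \sum_(i < K) l t i * fine (P [set w | k t w = i]))
      - \sum_(t < T) \sum_A l t (pi A) * pS t A)%:E)%E.
Proof.
(* Write the regret as one linear combination of indicators of level sets. *)
pose I := ('I_T * 'I_K + 'I_T * {set 'I_K})%type.
pose c (z : I) := match z with inl x => l x.1 x.2 | inr y => - l y.1 (pi y.2) end.
pose E (z : I) := match z with
  inl x => [set w | k x.1 w = x.2] | inr y => [set w | S y.1 w = y.2] end.
have mE z : measurable (E z) by case: z => [[t i]|[t A]] /=.
have -> : policy_regret_rv l S k pi = fun w => \sum_(z : I) c z * \1_(E z) w.
  apply: funext => w; rewrite /policy_regret_rv big_sumType -sumrN /=.
  congr (_ + _).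
    rewrite -(pair_bigA _ (fun t i => l t i * \1_[set w | k t w = i] w)).
    by apply: eq_bigr => t _; rewrite sum_mul_indic_level.
  rewrite -(pair_bigA _ (fun t A => - l t (pi A) * \1_[set w | S t w = A] w)).
  by apply: eq_bigr => t _; rewrite (sum_mul_indic_level (fun A => - l t (pi A))).
rewrite unlock integral_sum_indic // big_sumType /=; congr ((_ + _)%:E).
  by rewrite -(pair_bigA _ (fun t i => l t i * fine (P [set w | k t w = i]))).
rewrite -(pair_bigA _ (fun t A => - l t (pi A) * pS t A)) -sumrN.
by apply: eq_bigr => t _; rewrite -sumrN; apply: eq_bigr => A _; rewrite mulNr.
Qed.

Lemma ler_sum_mulr_const (a b q : 'I_T -> R) :
    (forall t, 0 <= q t) -> (forall t t', q t = q t') ->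
  \sum_(t < T) a t <= \sum_(t < T) b t ->
  \sum_(t < T) a t * q t <= \sum_(t < T) b t * q t.
Proof.
case: T a b q => [|T'] a b q q_ge0 q_const le_ab; first by rewrite !big_ord0.
have sum_mulq (f : 'I_T'.+1 -> R) : \sum_t f t * q t = (\sum_t f t) * q ord0.
  by rewrite mulr_suml; apply: eq_bigr => t _; rewrite (q_const t ord0).
by rewrite !sum_mulq ler_wpM2r.
Qed.

Hypothesis S_ident : forall t t' A,
  P [set w | S t w = A] = P [set w | S t' w = A].
Hypothesis S_neq0 : forall t w, S t w != finset.set0.

Lemma expectation_policy_regret_le_sorted x0 (s : {perm 'I_K}) pi :
    (forall m m' : 'I_K, (m <= m')%N ->
      \sum_(t < T) l t (s m) <= \sum_(t < T) l t (s m')) ->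
    is_policy pi ->
  ('E_P[policy_regret_rv l S k pi]
   <= 'E_P[policy_regret_rv l S k (policy_of_ordering x0 s)])%E.
Proof.
move=> s_sorts pi_policy.
rewrite !expectation_policy_regret lee_fin lerD2l lerN2.
rewrite [X in X <= _]exchange_big [X in _ <= X]exchange_big /=.
apply: ler_sum => A _.
have [->|A_neq0] := eqVneq A finset.set0.
  have pS_set0 t : pS t finset.set0 = 0.
    rewrite /pS (_ : [set w | S t w = finset.set0] = set0) ?measure0 //.
    by apply/seteqP; split => w //= S_eq; move: (S_neq0 t w); rewrite S_eq eqxx.
  by rewrite !big1 // => t _; rewrite pS_set0 mulr0.
apply: ler_sum_mulr_const => [t|t t'|]; first exact/fine_ge0/measure_ge0.
  by rewrite /pS (S_ident t t').
have [i sel_i] := ord_sel_nonempty s A_neq0.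
rewrite ffunE sel_i.
apply: (ord_sel_min (L := fun i => \sum_(t < T) l t i) s_sorts sel_i).
by move/forallP: pi_policy => /(_ A); rewrite A_neq0.
Qed.

End PolicyRegret.

Theorem mainTheorem8 (d : measure_display) (Omega : measurableType d)
  (R : realType) (P : probability Omega R) (T K : nat) (hK : (0 < K)%N)
  (l : 'I_T -> 'I_K -> R)
  (hl : forall t i, 0 <= l t i <= 1)
  (S : 'I_T -> Omega -> {set 'I_K})
  (hS : iid_sets P S)
  (hSne : forall t w, S t w != finset.set0)
  (k : 'I_T -> Omega -> 'I_K)
  (hkm : forall t (i : 'I_K), measurable [set w | k t w = i]%classic)
  (hkS : forall t w, k t w \in S t w) :
  (\big[maxe/-oo]_(pi : {ffun {set 'I_K} -> 'I_K} | is_policy pi)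
      'E_P[policy_regret_rv l S k pi]
   = \big[maxe/-oo]_(s : {perm 'I_K}) 'E_P[ordering_regret l S k s])%E.
Proof.
case: hS => hSm hSid _.
pose x0 := Ordinal hK.
have [s_opt s_opt_sorts] := sorting_perm x0 (fun i => \sum_(t < T) l t i).
apply/eqP; rewrite eq_le; apply/andP; split; apply: bigmax_le; rewrite ?leNye //.
- move=> pi pi_policy; apply: le_trans (le_bigmax _ _ s_opt).
  rewrite (ordering_regretE _ _ x0) //.
  exact: expectation_policy_regret_le_sorted.
- move=> s _; rewrite (ordering_regretE _ _ x0) //.
  exact: le_bigmax_cond (policy_of_ordering_is_policy x0 s).
Qed.
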